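(* In the standing setup, assume $A$ is generic and $\det f_0'(x)$ is not identically zero. Then $p_0=q_1+q_2+q_3$. Define $s_1=1-2\varepsilon^2(q_2+q_3)$, $s_2=1-2\varepsilon^2(q_1+q_3)$, $s_3=1-2\varepsilon^2(q_1+q_2)$, $s_0=1$, and (for $\varepsilon\ne0$) $P_0=\tfrac14\big(\tfrac1{s_0}+\tfrac1{s_1}+\tfrac1{s_2}+\tfrac1{s_3}\big)$, $Q_1=\tfrac1{4\varepsilon^2}\big(-\tfrac1{s_0}-\tfrac1{s_1}+\tfrac1{s_2}+\tfrac1{s_3}\big)$, $Q_2=\tfrac1{4\varepsilon^2}\big(-\tfrac1{s_0}+\tfrac1{s_1}-\tfrac1{s_2}+\tfrac1{s_3}\big)$, $Q_3=\tfrac1{4\varepsilon^2}\big(-\tfrac1{s_0}+\tfrac1{s_1}+\tfrac1{s_2}-\tfrac1{s_3}\big)$. Then at every $x$ with $s_1(x,\varepsilon)s_2(x,\varepsilon)s_3(x,\varepsilon)\neq0$, the matrix $\Pi(x)=J-\varepsilon^2(f_0'(x))^2J$ is invertible and $$\Pi(x)^{-1}=-P_0(x,\varepsilon)J-\varepsilon^2\sum_{i=1}^3Q_i(x,\varepsilon)B_iJ.$$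
   Context: Standing setup: $J=\begin{pmatrix}0&I_3\\-I_3&0\end{pmatrix}$ ($6\times6$). $A$ is a fixed real $6\times 6$ skew-Hamiltonian matrix ($A^{\rm T}J=JA$). $H_0$ is a homogeneous cubic polynomial on $\mathbb R^6$ with $A\nabla^2H_0(x)=\nabla^2H_0(x)A^{\rm T}$ for all $x$ ($\nabla^2$ = Hesse matrix), $f_0=J\nabla H_0$, with Jacobi matrix $f_0'$. Genericity: the characteristic polynomial of $A$ (a square of a cubic) has three pairwise distinct roots $\lambda_1,\lambda_2,\lambda_3$, each a double eigenvalue. $B_i=\alpha_iI+\beta_iA+\gamma_iA^2$ ($i=1,2,3$), where $\alpha_i+\beta_i\lambda+\gamma_i\lambda^2$ is the unique polynomial of degree $\le2$ equal to $-1$ at $\lambda_i$ and to $1$ at the other two eigenvalues. $p_0(x)=\tfrac18\operatorname{tr}(f_0'(x))^2$, $q_i(x)=\tfrac18\operatorname{tr}(B_i^{\rm T}(f_0'(x))^2)$. *)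

From HB Require Import structures.
From mathcomp Require Import all_boot all_order all_algebra.
Set Implicit Arguments. Unset Strict Implicit. Unset Printing Implicit Defensive.
Import Order.TTheory GRing.Theory Num.Theory.
Local Open Scope ring_scope.

Section Defs.
Variable F : numFieldType.

(* J = [[0, I_3], [-I_3, 0]] *)
Definition Jmx : 'M[F]_6 :=
  \matrix_(i < 6, j < 6)
    (if (i < 3)%N && (val j == (val i + 3)%N) then 1
     else if (3 <= i)%N && (val i == (val j + 3)%N) then -1 else 0).

Definition skew_hamiltonian (A : 'M[F]_6) : Prop := A^T *m Jmx = Jmx *m A.

Definition cubic (c : 'I_6 -> 'I_6 -> 'I_6 -> F) (x : 'cV[F]_6) : F :=
  \sum_(i < 6) \sum_(j < 6) \sum_(k < 6) c i j k * x i 0 * x j 0 * x k 0.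

(* Its Hesse matrix (second partial derivatives, computed formally). *)
Definition hess (c : 'I_6 -> 'I_6 -> 'I_6 -> F) (x : 'cV[F]_6) : 'M[F]_6 :=
  \matrix_(a < 6, b < 6)
    \sum_(k < 6) x k 0 * (c a b k + c b a k + c a k b + c b k a + c k a b + c k b a).

(* Jacobi matrix of f0 = J grad H0 *)
Definition f0' c x : 'M[F]_6 := Jmx *m hess c x.

Definition p0 c x : F := 8^-1 * \tr (f0' c x *m f0' c x).
Definition qq (B : 'M[F]_6) c x : F := 8^-1 * \tr (B^T *m (f0' c x *m f0' c x)).

Definition Bmx (A : 'M[F]_6) (al be ga : F) : 'M[F]_6 :=
  al%:M + be *: A + ga *: (A *m A).

Definition Pimx c (eps : F) x : 'M[F]_6 :=
  Jmx - eps ^+ 2 *: (f0' c x *m f0' c x *m Jmx).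

End Defs.
Arguments Jmx {F}.

(* A 6x6 skew-Hamiltonian matrix A (A^T J = J A) is annihilated by the cubic whose
   square is its characteristic polynomial.  With three distinct double eigenvalues the
   minimal polynomial of A is therefore (X - l1)(X - l2)(X - l3), so polynomials in A
   are determined by their values at the l_i; in particular B_i = 1 - 2 pi_i with pi_i the
   spectral projections.  Each pi_i is self-adjoint for the symplectic form J, hence has
   even rank, and the ranks add up to 6, so every pi_i has rank 2.  N = hess H0 * J
   commutes with A, hence with the pi_i, and tr (N pi_i) = 0; so N restricted to the
   plane im pi_i is a traceless 2x2 matrix and N^2 pi_i = mu_i pi_i.  In the basis of
   the pi_i everything is diagonal: q_i = (mu_1 + mu_2 + mu_3 - 2 mu_i) / 4, hence
   s_i = 1 - eps^2 mu_i, Pi = J * sum_i s_i pi_i, and Pi^-1 = - (sum_i s_i^-1 pi_i) J. *)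

From HB Require Import structures.
From mathcomp Require Import all_boot all_order all_algebra.
From mathcomp Require Import ring zify.
Import Order.TTheory GRing.Theory Num.Theory.
Set Implicit Arguments. Unset Strict Implicit. Unset Printing Implicit Defensive.
Local Open Scope ring_scope.

Section Idempotents.
Variables (F : fieldType) (n : nat).
Hypothesis two_neq0 : 2%:R != 0 :> F.
Implicit Types P K N H : 'M[F]_n.

Lemma idempotent_factor P : P *m P = P ->
  exists U : 'M_(n, \rank P), exists V : 'M_(\rank P, n), U *m V = P /\ V *m U = 1%:M.
Proof.
move=> PP; set V := row_base P; exists (P *m pinvmx V), V.
have PV : (P <= V)%MS by rewrite /V eq_row_base.
have VP : (V <= P)%MS by rewrite /V eq_row_base.
split; first exact: mulmxKpV.
apply: (row_free_inj (row_base_free P)); rewrite mul1mx -mulmxA (mulmxKpV PV).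
by rewrite -{1}(mulmxKpV VP) -mulmxA PP mulmxKpV.
Qed.

Lemma mxtrace_idempotent P : P *m P = P -> \tr P = (\rank P)%:R.
Proof.
by move=> /idempotent_factor [U [V [UV VU]]]; rewrite -{1}UV mxtrace_mulC VU mxtrace1.
Qed.

Lemma oppr_fix_eq0 (x : F) : - x = x -> x = 0.
Proof.
move/eqP; rewrite eq_sym -subr_eq0 opprK -mulr2n -mulr_natl mulf_eq0.
by rewrite (negbTE two_neq0) => /eqP.
Qed.

Lemma mxtrace_sym_skew_selfadjoint (H K P : 'M[F]_n) :
  H^T = H -> K^T = - K -> P^T *m K = K *m P -> \tr (H *m K *m P) = 0.
Proof.
move=> Hsym Kskew PK; apply: oppr_fix_eq0.
rewrite -{2}mxtrace_tr !trmx_mul Hsym Kskew mulNmx mulmxN mulmxA PK raddfN /=.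
by rewrite (mxtrace_mulC (K *m P)) mulmxA.
Qed.

Lemma det_skew_odd m (W : 'M[F]_m) : W^T = - W -> odd m -> \det W = 0.
Proof.
move=> Wskew m_odd; apply: oppr_fix_eq0.
by rewrite -{2}det_tr Wskew -scaleN1r detZ -signr_odd m_odd expr1 mulN1r.
Qed.

Section SymplecticIdempotent.
Variables (K P : 'M[F]_n).
Hypotheses (KK : K *m K = - 1%:M) (K_skew : K^T = - K).
Hypotheses (PP : P *m P = P) (PK : P^T *m K = K *m P).

Lemma idempotent_rank_even : ~~ odd (\rank P).
Proof.
have [U [V]] := idempotent_factor PP; move: (\rank P) U V => r U V [UV VU].
set W := U^T *m K *m U.
have VWV : V^T *m W *m V = K *m P.
  have : (U *m V)^T *m K *m (U *m V) = K *m P by rewrite UV PK -mulmxA PP.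
  by rewrite trmx_mul !mulmxA.
have VW : V^T *m W = K *m U.
  have := congr1 (mulmx^~ U) VWV; rewrite /= -(mulmxA (V^T *m W)) VU mulmx1 => ->.
  by rewrite -UV -!mulmxA VU mulmx1.
have W_inv : (- (V *m K *m V^T)) *m W = 1%:M.
  rewrite mulNmx -(mulmxA (V *m K)) VW mulmxA -(mulmxA V K K) KK.
  by rewrite mulmxN mulmx1 mulNmx opprK VU.
have W_skew : W^T = - W by rewrite /W !trmx_mul trmxK K_skew mulNmx mulmxN mulmxA.
apply/negP => /(det_skew_odd W_skew) detW0.
by have [_] := mulmx1_unit W_inv; rewrite unitmxE detW0 unitr0.
Qed.
End SymplecticIdempotent.

Lemma sqr_mx2_traceless (Z : 'M[F]_2) :
  \tr Z = 0 -> Z *m Z = (2^-1 * \tr (Z *m Z)) *: 1%:M.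
Proof.
have ord2 (i : 'I_2) : i = inord 0 \/ i = inord 1.
  by case: i => -[|[|//]] ?; [left | right]; apply: val_inj; rewrite /= inordK.
have sum2 (G : 'I_2 -> F) : \sum_i G i = G (inord 0) + G (inord 1).
  by rewrite big_ord_recl big_ord1; congr (G _ + G _); apply: val_inj; rewrite /= inordK.
have neq01 : (inord 0 == inord 1 :> 'I_2) = false by rewrite -(inj_eq val_inj) /= !inordK.
rewrite /mxtrace !sum2 !mxE => /eqP; rewrite addr_eq0 => /eqP Z00.
apply/matrixP => i j; rewrite !mxE !sum2 ?mxE ?sum2.
case: (ord2 i) (ord2 j) => -> [] ->; rewrite ?eqxx ?neq01 1?eq_sym ?neq01 Z00.
all: by rewrite /=; field.
Qed.

Lemma idempotent_rank2_sqr P N : P *m P = P -> \rank P = 2%N ->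
  N *m P = P *m N -> \tr (N *m P) = 0 ->
  N *m N *m P = (2^-1 * \tr (N *m N *m P)) *: P.
Proof.
move=> PP rkP NP trNP; have [U [V]] := idempotent_factor PP.
move: (\rank P) rkP U V => _ -> U V [UV VU].
set Z := V *m N *m U.
have trZ : \tr Z = 0 by rewrite /Z -mulmxA mxtrace_mulC -mulmxA UV.
have UZ : U *m Z = N *m U by rewrite /Z !mulmxA UV -NP -UV -!mulmxA VU mulmx1.
have NNP : N *m N *m P = U *m (Z *m Z) *m V.
  by clearbody Z; rewrite !mulmxA UZ -(mulmxA N U Z) UZ !mulmxA -(mulmxA _ U V) UV.
rewrite {1}NNP sqr_mx2_traceless // -scalemxAr -scalemxAl mulmx1 UV.
by rewrite NNP (mxtrace_mulC (U *m _)) !mulmxA VU mul1mx.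
Qed.
End Idempotents.

Section OrthogonalIdempotents.
Variables (F : fieldType) (n k : nat) (P : 'I_k -> 'M[F]_n).
Hypothesis P_orth : forall i j, P i *m P j = (i == j)%:R *: P i.

Lemma mulmx_sum_orthogonal (a b : 'I_k -> F) :
  (\sum_i a i *: P i) *m (\sum_i b i *: P i) = \sum_i (a i * b i) *: P i.
Proof.
rewrite mulmx_suml; apply: eq_bigr => i _; rewrite mulmx_sumr (bigD1 i) //= big1.
  by rewrite addr0 -scalemxAl -scalemxAr P_orth eqxx scale1r scalerA.
by move=> j /negbTE ji; rewrite -scalemxAl -scalemxAr P_orth eq_sym ji !scale0r !scaler0.
Qed.

Hypothesis P_sum : \sum_i P i = 1%:M.

Lemma mulmx_sum_orthogonal_inv (K : 'M[F]_n) (a b : 'I_k -> F) :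
  K *m K = - 1%:M -> (forall i, a i * b i = 1) ->
  (K *m \sum_i a i *: P i) *m - ((\sum_i b i *: P i) *m K) = 1%:M.
Proof.
move=> KK ab; rewrite mulmxN -!mulmxA (mulmxA (\sum_i _)) mulmx_sum_orthogonal.
under eq_bigr do rewrite ab scale1r.
by rewrite P_sum mul1mx KK opprK.
Qed.

End OrthogonalIdempotents.

Section SplitMinimalPolynomial.
Variables (F : fieldType) (n k : nat) (A : 'M[F]_n.+1) (lam : 'I_k -> F).
Hypotheses (lam_inj : injective lam) (lam_root : forall j, root (char_poly A) (lam j)).
Variable c : {poly F}.
Hypotheses (c_neq0 : c != 0) (size_c : (size c <= k.+1)%N) (c_root : horner_mx A c = 0).

Let rs := [seq lam j | j <- enum 'I_k].
Let m := \prod_(z <- rs) ('X - z%:P).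

Lemma dvdp_spectrum p : (forall j, root p (lam j)) -> m %| p.
Proof.
move=> p_lam; have all_p : all (root p) rs by apply/allP => _ /mapP[j _ ->].
have uniq_rs : uniq_roots rs by rewrite uniq_rootsE map_inj_uniq ?enum_uniq.
by have [q ->] := uniq_roots_prod_XsubC all_p uniq_rs; apply: dvdp_mull.
Qed.

Lemma mxminpoly_eqp_spectrum : mxminpoly A %= m.
Proof.
have m_min : m %| mxminpoly A by apply: dvdp_spectrum => j; rewrite root_mxminpoly.
have min_c : mxminpoly A %| c := mxminpoly_min c_root.
have size_m : size m = k.+1 by rewrite size_prod_XsubC size_map size_enum_ord.
rewrite eqp_sym -dvdp_size_eqp // eqn_leq dvdp_leq ?monic_neq0 ?mxminpoly_monic //=.
by rewrite size_m (leq_trans _ size_c) // dvdp_leq.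
Qed.

Lemma horner_mx_eq0_spectrum p : (forall j, p.[lam j] = 0) -> horner_mx A p = 0.
Proof.
move=> p_lam; apply/mxminpoly_minP.
by rewrite (eqp_dvdl _ mxminpoly_eqp_spectrum) dvdp_spectrum // => j; apply/eqP.
Qed.

End SplitMinimalPolynomial.

Section SpectralProjections.
Variables (F : fieldType) (n k : nat) (A : 'M[F]_n.+1) (lam : 'I_k -> F).
Hypothesis annihilated : forall p, (forall j, p.[lam j] = 0) -> horner_mx A p = 0.
Variable e : 'I_k -> {poly F}.
Hypothesis e_lam : forall i j, (e i).[lam j] = (i == j)%:R.

Lemma horner_mx_eq_spectrum p q :
  (forall j, p.[lam j] = q.[lam j]) -> horner_mx A p = horner_mx A q.
Proof.
move=> pq; apply/eqP; rewrite -subr_eq0 -rmorphB; apply/eqP/annihilated => j.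
by rewrite hornerD hornerN pq subrr.
Qed.

Lemma spectral_projection_mul i j :
  horner_mx A (e i) *m horner_mx A (e j) = (i == j)%:R *: horner_mx A (e i).
Proof.
rewrite mulmxE -rmorphM -linearZ /=; apply: horner_mx_eq_spectrum => l.
rewrite hornerM hornerZ !e_lam.
by case: (i =P l) => [->|_]; rewrite ?(eqxx, mul1r, mulr1, mul0r, mulr0) // eq_sym.
Qed.

Lemma spectral_projection_sum : \sum_i horner_mx A (e i) = 1%:M.
Proof.
rewrite -rmorph_sum -(horner_mx_C A); apply: horner_mx_eq_spectrum => l.
rewrite horner_sum hornerC (bigD1 l) //= big1 => [|i /negbTE il].
  by rewrite e_lam eqxx addr0.
by rewrite e_lam il.
Qed.

End SpectralProjections.

Lemma trmx_horner_mx_mul (F : fieldType) n (A K : 'M[F]_n.+1) p :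
  A^T *m K = K *m A -> (horner_mx A p)^T *m K = K *m horner_mx A p.
Proof.
move=> AK; elim/poly_ind: p => [|p a IHp]; first by rewrite rmorph0 trmx0 mul0mx mulmx0.
rewrite rmorphD rmorphM /= horner_mx_X horner_mx_C -mulmxE linearD /= trmx_mul.
rewrite tr_scalar_mx !mulmxDl mulmxDr -mulmxA IHp !mulmxA AK -!mulmxA.
by rewrite (comm_mx_horner _ (comm_mx_refl A)) scalar_mxC.
Qed.

Section ExplicitMatrices.
Variable F : numFieldType.

Definition mx6 (f : nat -> nat -> F) : 'M[F]_6 := \matrix_(i < 6, j < 6) f i j.

Lemma mx6_mul f g : mx6 f *m mx6 g = mx6 (fun i j =>
  f i 0%N * g 0%N j + f i 1%N * g 1%N j + f i 2%N * g 2%N j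
  + f i 3%N * g 3%N j + f i 4%N * g 4%N j + f i 5%N * g 5%N j).
Proof. by apply/matrixP=> i j; rewrite !mxE !big_ord_recr big_ord0 /= !mxE add0r. Qed.

Lemma mx6_tr f : (mx6 f)^T = mx6 (fun i j => f j i).
Proof. by apply/matrixP => i j; rewrite !mxE. Qed.

Lemma mxtrace_mx6 f : \tr (mx6 f) =
  f 0%N 0%N + f 1%N 1%N + f 2%N 2%N + f 3%N 3%N + f 4%N 4%N + f 5%N 5%N.
Proof. by rewrite /mxtrace !big_ord_recr big_ord0 /= !mxE add0r. Qed.

Lemma mx6_eq {f g} :
  mx6 f = mx6 g -> forall {i j}, (i < 6)%N -> (j < 6)%N -> f i j = g i j.
Proof.
move=> fg i j lt_i6 lt_j6.
by have := congr1 (fun M : 'M[F]_6 => M (Ordinal lt_i6) (Ordinal lt_j6)) fg; rewrite !mxE.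
Qed.

Definition J6 (i j : nat) : F :=
  if (i < 3)%N && (j == i + 3)%N then 1 else if (3 <= i)%N && (i == j + 3)%N then -1 else 0.

Lemma Jmx_mx6 : Jmx = mx6 J6.
Proof. by apply/matrixP => i j; rewrite !mxE. Qed.

Ltac entries6 :=
  apply/matrixP => -[[|[|[|[|[|[|?]]]]]] ?] -[[|[|[|[|[|[|?]]]]]] ?]; rewrite !mxE //=.

Lemma Jmx_sqr : Jmx *m Jmx = - 1%:M :> 'M[F]_6.
Proof. rewrite Jmx_mx6 mx6_mul; entries6; rewrite /J6 /=; ring. Qed.

Lemma trmx_Jmx : (Jmx : 'M[F]_6)^T = - Jmx.
Proof. rewrite Jmx_mx6 mx6_tr; entries6; rewrite /J6 /=; ring. Qed.

Lemma hess_sym (c : 'I_6 -> 'I_6 -> 'I_6 -> F) x : (hess c x)^T = hess c x.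
Proof. by apply/matrixP => i j; rewrite !mxE; apply: eq_bigr => k _; congr (_ * _); ring. Qed.

Definition skew3 (a01 a02 a12 : F) (i j : nat) : F :=
  match i, j with
  | 0, 1 => a01 | 1, 0 => - a01 | 0, 2 => a02 | 2, 0 => - a02
  | 1, 2 => a12 | 2, 1 => - a12 | _, _ => 0
  end.

Definition skew_ham6 (P Q R : nat -> nat -> F) (i j : nat) : F :=
  if (i < 3)%N && (j < 3)%N then P i j
  else if (i < 3)%N then Q i (j - 3)%N
  else if (j < 3)%N then R (i - 3)%N j
  else P (j - 3)%N (i - 3)%N.

Lemma skew_hamiltonianE (A : 'M[F]_6) : skew_hamiltonian A ->
  let a i j := A (inord i) (inord j) in
  A = mx6 (skew_ham6 a (skew3 (a 0 4) (a 0 5) (a 1 5)) (skew3 (a 3 1) (a 3 2) (a 4 2)))%N.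
Proof.
move=> A_skew a; have Aa : A = mx6 a by apply/matrixP => i j; rewrite !mxE /a !inord_val.
rewrite /skew_hamiltonian Aa Jmx_mx6 mx6_tr !mx6_mul in A_skew.
rewrite {1}Aa; apply/matrixP => i j; rewrite !mxE.
(* Entry (i, j) of A is read off entry (j, i + 3 mod 6) of A^T J = J A. *)
have := mx6_eq A_skew (ltn_ord j) (ltn_pmod (i + 3) (isT : 0 < 6)%N).
move: i j => [[|[|[|[|[|[|?]]]]]] ?] [[|[|[|[|[|[|?]]]]]] ?] //=.
all: rewrite /modn -?minusE /J6 /skew_ham6 /=.
all: rewrite ?(mul0r, mulr0, mul1r, mulr1, mulN1r, mulrN1, addr0, add0r) => e.
all: first [ done | exact: oppr_inj | by rewrite e ?opprK | by rewrite -e ?opprK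
           | by apply/eqP; rewrite -eqNr e | by apply/eqP; rewrite -eqNr -e ].
Qed.

End ExplicitMatrices.

Section SkewHamiltonianCubic.
Variable F : numFieldType.

Definition cubic_poly (a b c d : F) : {poly F} :=
  ((a%:P * 'X + b%:P) * 'X + c%:P) * 'X + d%:P.

Lemma size_cubic_poly a b c d : a != 0 -> size (cubic_poly a b c d) = 4%N.
Proof.
move=> a_neq0.
have size_MXaddC' (p : {poly F}) e : size p != 0%N -> size (p * 'X + e%:P) = (size p).+1.
  by move=> p_neq0; rewrite size_MXaddC -size_poly_eq0 (negbTE p_neq0).
by rewrite /cubic_poly !size_MXaddC' // size_polyC a_neq0.
Qed.

Lemma horner_mx_cubic_poly n (A : 'M[F]_n.+1) a b c d :
  horner_mx A (cubic_poly a b c d) = ((a%:M *m A + b%:M) *m A + c%:M) *m A + d%:M.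
Proof. by rewrite !(rmorphD, rmorphM) /= !horner_mx_C !horner_mx_X. Qed.

(* 48 times the monic cubic whose roots have power sums tr (A^k) / 2 (Newton's
   identities): for a skew-Hamiltonian A it is the square root of char_poly A. *)
Definition trace_cubic n (A : 'M[F]_n) : {poly F} :=
  let t1 := \tr A in let t2 := \tr (A *m A) in let t3 := \tr (A *m A *m A) in
  cubic_poly 48 (- (24 * t1)) (6 * (t1 ^+ 2 - 2 * t2))
    (- (t1 ^+ 3 - 6 * t1 * t2 + 8 * t3)).

Lemma horner_mx_trace_cubic_skew_ham6 (P : nat -> nat -> F) q01 q02 q12 r01 r02 r12 :
  let A := mx6 (skew_ham6 P (skew3 q01 q02 q12) (skew3 r01 r02 r12)) in
  horner_mx A (trace_cubic A) = 0.
Proof.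
move=> A; rewrite horner_mx_cubic_poly !mulmxDl !mul_scalar_mx -!scalemxAl.
rewrite /A !mx6_mul !mxtrace_mx6 /=.
apply/matrixP => i j; rewrite !mxE.
move: i j => -[[|[|[|[|[|[|?]]]]]] ?] -[[|[|[|[|[|[|?]]]]]] ?] //.
all: rewrite /skew_ham6 /= -?minusE /=.
all: ring.
Qed.

Lemma horner_mx_trace_cubic (A : 'M[F]_6) :
  skew_hamiltonian A -> horner_mx A (trace_cubic A) = 0.
Proof. by move=> /skew_hamiltonianE ->; apply: horner_mx_trace_cubic_skew_ham6. Qed.

End SkewHamiltonianCubic.

Lemma sum_ord3 (V : nmodType) (G : 'I_3 -> V) : \sum_i G i = G 0 + G 1 + G 2.
Proof.
rewrite !big_ord_recr big_ord0 /= add0r.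
by congr (G _ + G _ + G _); apply: val_inj.
Qed.

Lemma forall_ord3 (P : 'I_3 -> Prop) : P 0 -> P 1 -> P 2 -> forall i, P i.
Proof.
move=> P0 P1 P2 [[|[|[|//]]] ?]; [move: P0 | move: P1 | move: P2].
all: by congr P; apply: val_inj.
Qed.

Section SkewHamiltonianSpectrum.
Variables (F : numFieldType) (A : 'M[F]_6) (lam al be ga : 'I_3 -> F).
Hypotheses (A_skew : skew_hamiltonian A) (lam_inj : injective lam).
Hypothesis char_A : char_poly A = \prod_i ('X - (lam i)%:P) ^+ 2.
Hypothesis B_lam :
  forall i j, al i + be i * lam j + ga i * lam j ^+ 2 = (if i == j then -1 else 1).

Let two_neq0 : 2%:R != 0 :> F. Proof. by rewrite pnatr_eq0. Qed.

Local Notation B i := (Bmx A (al i) (be i) (ga i)).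

Definition Bpoly i : {poly F} := (al i)%:P + be i *: 'X + ga i *: 'X^2.
Definition spectral_poly i : {poly F} := 2^-1 *: (1 - Bpoly i).
Definition spectral_proj i : 'M[F]_6 := horner_mx A (spectral_poly i).
Local Notation pi := spectral_proj.

Lemma root_char_lam j : root (char_poly A) (lam j).
Proof.
rewrite char_A /root horner_prod; apply/prodf_eq0; exists j => //.
by rewrite horner_exp hornerXsubC subrr expr0n.
Qed.

Lemma horner_mx_annihilated p : (forall j, p.[lam j] = 0) -> horner_mx A p = 0.
Proof.
have size_c : size (trace_cubic A) = 4%N by rewrite size_cubic_poly ?pnatr_eq0.
apply: (horner_mx_eq0_spectrum lam_inj root_char_lam _ _ (horner_mx_trace_cubic A_skew)).
  by rewrite -size_poly_eq0 size_c.
by rewrite size_c.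
Qed.

Lemma Bpoly_lam i j : (Bpoly i).[lam j] = if i == j then -1 else 1.
Proof. by rewrite -B_lam /Bpoly !hornerD hornerC !hornerZ hornerX hornerXn. Qed.

Lemma spectral_poly_lam i j : (spectral_poly i).[lam j] = (i == j)%:R.
Proof.
rewrite /spectral_poly hornerZ hornerD hornerN hornerC Bpoly_lam.
by case: eqP => _ /=; [field | rewrite subrr mulr0].
Qed.

Lemma spectral_proj_mul i j : pi i *m pi j = (i == j)%:R *: pi i.
Proof. exact: spectral_projection_mul horner_mx_annihilated _ spectral_poly_lam i j. Qed.

Lemma sum_spectral_proj : \sum_i pi i = 1%:M.
Proof. exact: spectral_projection_sum horner_mx_annihilated _ spectral_poly_lam. Qed.

Lemma horner_mx_Bpoly i : horner_mx A (Bpoly i) = B i.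
Proof.
by rewrite /Bpoly !rmorphD /= !horner_mxZ horner_mx_C rmorphXn /= horner_mx_X expr2 -mulmxE.
Qed.

Lemma Bmx_spectral i : B i = 1%:M - 2 *: pi i.
Proof.
rewrite /pi /spectral_poly horner_mxZ scalerA mulfV // scale1r rmorphB /=.
by rewrite horner_mx_Bpoly -polyC1 horner_mx_C opprB addrC subrK.
Qed.

Lemma sum_Bmx : B 0 + B 1 + B 2 = 1%:M.
Proof.
have := sum_spectral_proj; rewrite sum_ord3 !Bmx_spectral => <-.
by apply/matrixP => r s; rewrite !mxE; ring.
Qed.

Lemma trmx_horner_mx_J p : (horner_mx A p)^T *m Jmx = Jmx *m horner_mx A p.
Proof. exact: trmx_horner_mx_mul. Qed.

Lemma spectral_proj_idem i : pi i *m pi i = pi i.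
Proof. by rewrite spectral_proj_mul eqxx scale1r. Qed.

Lemma spectral_proj_neq0 i : pi i != 0.
Proof.
apply/eqP => /mxminpoly_min min_dvd.
have := root_dvdp min_dvd (x := lam i).
rewrite root_mxminpoly root_char_lam => /(_ isT).
by rewrite /root spectral_poly_lam eqxx oner_eq0.
Qed.

Lemma rank_spectral_proj i : \rank (pi i) = 2%N.
Proof.
have rank_even j : (\rank (pi j)) = (\rank (pi j))./2.*2.
  have := idempotent_rank_even two_neq0 (Jmx_sqr F) (trmx_Jmx F) (spectral_proj_idem j).
  by move=> /(_ (trmx_horner_mx_J _)) /negbTE odd_j; rewrite -[LHS]odd_double_half odd_j.
have rank_pos j : (0 < \rank (pi j))%N by rewrite lt0n mxrank_eq0 spectral_proj_neq0.
have rank_sum : (\rank (pi 0%R) + \rank (pi 1%R) + \rank (pi 2%R))%N = 6%N.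
  apply/eqP; rewrite -(eqr_nat F) !natrD -!mxtrace_idempotent ?spectral_proj_idem //.
  by rewrite -!mxtraceD -sum_ord3 sum_spectral_proj mxtrace1.
move: rank_sum (rank_pos 0) (rank_pos 1) (rank_pos 2).
rewrite (rank_even 0) (rank_even 1) (rank_even 2) => *.
by move: i; apply: forall_ord3; rewrite rank_even; lia.
Qed.

Lemma mxtrace_spectral_proj i : \tr (pi i) = 2.
Proof. by rewrite mxtrace_idempotent ?spectral_proj_idem // rank_spectral_proj. Qed.

Lemma trmx_Bmx_J i : (B i)^T *m Jmx = Jmx *m B i.
Proof. by rewrite -horner_mx_Bpoly trmx_horner_mx_J. Qed.

Variable c : 'I_6 -> 'I_6 -> 'I_6 -> F.
Hypothesis A_hess : forall x, A *m hess c x = hess c x *m A^T.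
Variable x : 'cV[F]_6.

Local Notation N := (hess c x *m Jmx).

Definition sqr_eigen i := 2^-1 * \tr (N *m N *m pi i).
Local Notation mu := sqr_eigen.

Lemma comm_N_spectral_proj i : N *m pi i = pi i *m N.
Proof.
have AN : comm_mx A N by rewrite /comm_mx mulmxA A_hess -mulmxA A_skew mulmxA.
exact/esym/comm_horner_mx.
Qed.

Lemma sqrN_spectral_proj i : N *m N *m pi i = mu i *: pi i.
Proof.
apply: (idempotent_rank2_sqr two_neq0 (spectral_proj_idem i) (rank_spectral_proj i)).
  exact: comm_N_spectral_proj.
exact: (mxtrace_sym_skew_selfadjoint two_neq0 (hess_sym c x) (trmx_Jmx F)
  (trmx_horner_mx_J _)).
Qed.

Lemma sqrN_spectral : N *m N = \sum_i mu i *: pi i.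
Proof.
rewrite -[LHS]mulmx1 -sum_spectral_proj mulmx_sumr.
by apply: eq_bigr => i _; rewrite sqrN_spectral_proj.
Qed.

Lemma qq_J (Bm : 'M[F]_6) :
  Bm^T *m Jmx = Jmx *m Bm -> qq Bm c x = 8^-1 * \tr (Bm *m (N *m N)).
Proof. by move=> BJ; rewrite /qq /f0' !mulmxA BJ -!mulmxA mxtrace_mulC !mulmxA. Qed.

Lemma qq_Bmx i : qq (B i) c x = 4^-1 * (mu 0 + mu 1 + mu 2 - 2 * mu i).
Proof.
have trNN : \tr (N *m N) = 2 * (mu 0 + mu 1 + mu 2).
  rewrite sqrN_spectral raddf_sum sum_ord3 /= !mxtraceZ !mxtrace_spectral_proj; ring.
rewrite qq_J ?trmx_Bmx_J // Bmx_spectral mulmxBl mul1mx -scalemxAl mxtraceD raddfN /=.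
rewrite mxtraceZ trNN mxtrace_mulC sqrN_spectral_proj mxtraceZ mxtrace_spectral_proj.
by field.
Qed.

Lemma p0_sum_qq : p0 c x = qq (B 0) c x + qq (B 1) c x + qq (B 2) c x.
Proof.
by rewrite /qq -!mulrDr -!mxtraceD -!mulmxDl -!linearD /= sum_Bmx trmx1 mul1mx.
Qed.

Lemma Pimx_spectral eps :
  Pimx c eps x = Jmx *m \sum_i (1 - eps ^+ 2 * mu i) *: pi i.
Proof.
under eq_bigr do rewrite scalerBl scale1r -scalerA.
rewrite sumrB -scaler_sumr -sqrN_spectral sum_spectral_proj mulmxBr mulmx1.
by rewrite /Pimx /f0' -scalemxAr !mulmxA.
Qed.

Lemma Bmx_combination (P0 Q1 Q2 Q3 : F) :
  P0 *: 1%:M + (Q1 *: B 0 + Q2 *: B 1 + Q3 *: B 2) =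
  (P0 - Q1 + Q2 + Q3) *: pi 0 + (P0 + Q1 - Q2 + Q3) *: pi 1
  + (P0 + Q1 + Q2 - Q3) *: pi 2.
Proof.
rewrite !Bmx_spectral -sum_spectral_proj sum_ord3.
by apply/matrixP => r s; rewrite !mxE; ring.
Qed.

Lemma Pimx_invmx eps : (forall i, 1 - eps ^+ 2 * mu i != 0) ->
  Pimx c eps x \in unitmx /\
  invmx (Pimx c eps x) = - ((\sum_i (1 - eps ^+ 2 * mu i)^-1 *: pi i) *m Jmx).
Proof.
move=> s_neq0.
have Pi_inv :
    Pimx c eps x *m - ((\sum_i (1 - eps ^+ 2 * mu i)^-1 *: pi i) *m Jmx) = 1%:M.
  rewrite Pimx_spectral; apply: mulmx_sum_orthogonal_inv (Jmx_sqr F) _ => [i j|//|i].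
  - exact: spectral_proj_mul.
  - exact: sum_spectral_proj.
  - by rewrite mulfV.
have [Pi_unit _] := mulmx1_unit Pi_inv.
by split; last rewrite -[LHS]mulmx1 -Pi_inv mulKmx.
Qed.

End SkewHamiltonianSpectrum.

Lemma inverse_coefficients (F : numFieldType) (e s1 s2 s3 : F) :
  e != 0 -> s1 != 0 -> s2 != 0 -> s3 != 0 ->
  let P0 := 4^-1 * (1^-1 + s1^-1 + s2^-1 + s3^-1) in
  let Q1 := (4 * e ^+ 2)^-1 * (- 1^-1 - s1^-1 + s2^-1 + s3^-1) in
  let Q2 := (4 * e ^+ 2)^-1 * (- 1^-1 + s1^-1 - s2^-1 + s3^-1) in
  let Q3 := (4 * e ^+ 2)^-1 * (- 1^-1 + s1^-1 + s2^-1 - s3^-1) in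
  [/\ P0 - e ^+ 2 * Q1 + e ^+ 2 * Q2 + e ^+ 2 * Q3 = s1^-1,
      P0 + e ^+ 2 * Q1 - e ^+ 2 * Q2 + e ^+ 2 * Q3 = s2^-1 &
      P0 + e ^+ 2 * Q1 + e ^+ 2 * Q2 - e ^+ 2 * Q3 = s3^-1].
Proof.
move=> e_neq0 s1_neq0 s2_neq0 s3_neq0 P0 Q1 Q2 Q3.
have four_neq0 : (4 : F) != 0 by rewrite pnatr_eq0.
by rewrite /P0 /Q1 /Q2 /Q3; split; field; rewrite e_neq0 s1_neq0 s2_neq0 s3_neq0.
Qed.

Unset Implicit Arguments.

Theorem mainTheorem15 (F : numFieldType) (A : 'M[F]_6)
  (c : 'I_6 -> 'I_6 -> 'I_6 -> F)
  (lam : 'I_3 -> F) (al be ga : 'I_3 -> F) :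
  skew_hamiltonian A ->
  (forall x : 'cV[F]_6, A *m hess c x = hess c x *m A^T) ->
  (* genericity: char. polynomial = prod (X - lam_i)^2, lam_i pairwise distinct *)
  char_poly A = \prod_(i < 3) ('X - (lam i)%:P) ^+ 2 ->
  injective lam ->
  (* al_i + be_i t + ga_i t^2 is -1 at lam_i and 1 at the other eigenvalues *)
  (forall i j : 'I_3,
      al i + be i * lam j + ga i * lam j ^+ 2 = (if i == j then -1 else 1)) ->
  (exists x0 : 'cV[F]_6, \det (f0' c x0) != 0) ->
  let B := fun i => Bmx A (al i) (be i) (ga i) in
  let q := fun i x => qq (B i) c x in
  (forall x : 'cV[F]_6, p0 c x = q 0 x + q 1 x + q 2 x) /\
  (forall (eps : F) (x : 'cV[F]_6), eps != 0 ->
     let s0 : F := 1 in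
     let s1 := 1 - 2 * eps ^+ 2 * (q 1 x + q 2 x) in
     let s2 := 1 - 2 * eps ^+ 2 * (q 0 x + q 2 x) in
     let s3 := 1 - 2 * eps ^+ 2 * (q 0 x + q 1 x) in
     let P0 := 4^-1 * (s0^-1 + s1^-1 + s2^-1 + s3^-1) in
     let Q1 := (4 * eps ^+ 2)^-1 * (- s0^-1 - s1^-1 + s2^-1 + s3^-1) in
     let Q2 := (4 * eps ^+ 2)^-1 * (- s0^-1 + s1^-1 - s2^-1 + s3^-1) in
     let Q3 := (4 * eps ^+ 2)^-1 * (- s0^-1 + s1^-1 + s2^-1 - s3^-1) in
     s1 * s2 * s3 != 0 ->
     Pimx c eps x \in unitmx /\
     invmx (Pimx c eps x) =
       - (P0 *: Jmx)
       - eps ^+ 2 *: (Q1 *: (B 0 *m Jmx) + Q2 *: (B 1 *m Jmx) + Q3 *: (B 2 *m Jmx))).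
Proof.
move=> A_skew A_hess char_A lam_inj B_lam _ B q.
split=> [x | eps x eps_neq0 s0 s1 s2 s3 P0 Q1 Q2 Q3 s_neq0].
  exact: (p0_sum_qq A_skew lam_inj char_A B_lam).
pose mu := sqr_eigen A al be ga c x.
have [s1E s2E s3E] :
    [/\ s1 = 1 - eps ^+ 2 * mu 0, s2 = 1 - eps ^+ 2 * mu 1 & s3 = 1 - eps ^+ 2 * mu 2].
  by rewrite /s1 /s2 /s3 /q /mu !(qq_Bmx A_skew lam_inj char_A B_lam A_hess); split; field.
have [[s1_neq0 s2_neq0] s3_neq0] : (s1 != 0 /\ s2 != 0) /\ s3 != 0.
  by move: s_neq0; rewrite !mulf_eq0 !negb_or => /andP[/andP[-> ->] ->].
have s_mu_neq0 : forall i, 1 - eps ^+ 2 * mu i != 0.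
  by apply: forall_ord3; rewrite /= -?s1E -?s2E -?s3E.
have [Pi_unit ->] := Pimx_invmx A_skew lam_inj char_A B_lam A_hess s_mu_neq0.
split=> //; rewrite sum_ord3 -/mu -s1E -s2E -s3E.
have [<- <- <-] : [/\ P0 - eps ^+ 2 * Q1 + eps ^+ 2 * Q2 + eps ^+ 2 * Q3 = s1^-1,
    P0 + eps ^+ 2 * Q1 - eps ^+ 2 * Q2 + eps ^+ 2 * Q3 = s2^-1 &
    P0 + eps ^+ 2 * Q1 + eps ^+ 2 * Q2 - eps ^+ 2 * Q3 = s3^-1] :=
  inverse_coefficients eps_neq0 s1_neq0 s2_neq0 s3_neq0.
rewrite -(Bmx_combination A_skew lam_inj char_A B_lam) -/(B 0) -/(B 1) -/(B 2).
move: (B 0) (B 1) (B 2) => B0 B1 B2.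
by rewrite mulmxDl !mulmxDl -!scalemxAl mul1mx opprD !scalerDr !scalerA.
Qed.
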